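(* Let $\cdot:H\otimes B\to B$ be a symmetric partial action of $H$ on a unital algebra $B$, and consider the partial $H$-module $(B,\pi)$ with $\pi(h)(b)=h\cdot b$ and its standard dilation $((\overline B,T_\pi),\varphi)$. Then: (1) $\overline B\subseteq\operatorname{Hom}_k(H,B)$ is closed under the convolution product $(f*g)(k)=f(k_{(1)})g(k_{(2)})$. With this product and the action $(h\triangleright f)(k)=f(kh)$, it is an idempotent (not necessarily unital) $H$-module algebra, i.e. $h\triangleright(f*g)=(h_{(1)}\triangleright f)*(h_{(2)}\triangleright g)$ and $\overline B*\overline B=\overline B$; (2) $\varphi:B\to\overline B$ is multiplicative; (3) $\varphi(B)$ is an ideal of $\overline B$. Consequently, $(\overline B,\varphi)$ is the globalization (enveloping action) of the partial action on $B$. That is, $\varphi$ is an injective multiplicative map whose image is an ideal of $\overline B$ generating $\overline B$ as an $H$-module, and $\varphi(h\cdot b)=\varphi(1_B)*(h\triangleright\varphi(b))$ for all $h\in H$, $b\in B$.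
   Context: Throughout, $k$ is a field and $H$ is a Hopf algebra over $k$ with bijective antipode $S$ and Sweedler notation $\Delta(h)=h_{(1)}\otimes h_{(2)}$. A symmetric partial action of $H$ on a unital algebra $B$ is a linear map $h\otimes b\mapsto h\cdot b$ such that for all $h,k\in H$, $a,b\in B$: - $1_H\cdot a=a$; - $h\cdot(ab)=(h_{(1)}\cdot a)(h_{(2)}\cdot b)$; - $h\cdot(k\cdot a)=(h_{(1)}\cdot1_B)(h_{(2)}k\cdot a)$; - $h\cdot(k\cdot a)=(h_{(1)}k\cdot a)(h_{(2)}\cdot1_B)$. Standard dilation of a partial $H$-module $(M,\pi)$: $\operatorname{Hom}_k(H,M)$ is a left $H$-module via $(h\triangleright f)(k)=f(kh)$. Set $\varphi(m)(h)=\pi(h)(m)$, let $\overline M=H\triangleright\varphi(M)$ be the $H$-submodule generated by $\varphi(M)$, and $T_\pi(f)=\varphi(f(1_H))$. *)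

From HB Require Import structures.
From mathcomp Require Import all_boot all_order all_algebra.
Set Implicit Arguments.
Unset Strict Implicit.
Unset Printing Implicit Defensive.
Import GRing.Theory.
Local Open Scope ring_scope.

Section Lin.
Variable k : fieldType.

Definition klinear (U V : lmodType k) (f : U -> V) : Prop :=
  forall (a : k) (u v : U), f (a *: u + v) = a *: f u + f v.

Definition kbilinear (U W V : lmodType k) (b : U -> W -> V) : Prop :=
  (forall w, klinear (fun u => b u w)) /\ (forall u, klinear (b u)).

Definition ktrilinear (U1 U2 U3 V : lmodType k) (t : U1 -> U2 -> U3 -> V) : Prop :=
  (forall y z, klinear (fun x => t x y z)) /\
  (forall x z, klinear (fun y => t x y z)) /\
  (forall x y, klinear (t x y)).
End Lin.

(* Tensors are represented by finite lists of pure tensors:           *)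
(* s : seq (H * H) stands for  \sum_(p <- s) p.1 (x) p.2.             *)
(* Two such lists denote the same element of H (x) H iff every        *)
(* bilinear map (into any k-vector space) takes the same value on     *)
(* them (universal property of the tensor product).                   *)
Section Tensor.
Variables (k : fieldType) (H : algType k).

Definition teq2 (s t : seq (H * H)) : Prop :=
  forall (V : lmodType k) (b : H -> H -> V), kbilinear b ->
    \sum_(p <- s) b p.1 p.2 = \sum_(p <- t) b p.1 p.2.

Definition teq3 (s t : seq (H * H * H)) : Prop :=
  forall (V : lmodType k) (tr : H -> H -> H -> V), ktrilinear tr ->
    \sum_(p <- s) tr p.1.1 p.1.2 p.2 = \sum_(p <- t) tr p.1.1 p.1.2 p.2.

(* Hopf algebra structure on the k-algebra H: coproduct (given by a     *)
(* Sweedler representative  cop h = [:: (h_(1), h_(2)); ...]), counit  *)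
(* eps and antipode S, the latter required to be bijective.             *)
Definition is_hopf (cop : H -> seq (H * H)) (eps : H -> k) (S : H -> H) : Prop :=
  [/\
      forall (a : k) (x y : H),
        teq2 (cop (a *: x + y)) ([seq (a *: p.1, p.2) | p <- cop x] ++ cop y),
      forall x : H,
        teq3 [seq ((q.1, q.2), p.2) | p <- cop x, q <- cop p.1]
             [seq ((p.1, q.1), q.2) | p <- cop x, q <- cop p.2],
      (forall (a : k) (x y : H), eps (a *: x + y) = a * eps x + eps y) /\
      (forall x : H, \sum_(p <- cop x) eps p.1 *: p.2 = x /\
                     \sum_(p <- cop x) eps p.2 *: p.1 = x),
      (forall x y : H,
        teq2 (cop (x * y)) [seq (p.1 * q.1, p.2 * q.2) | p <- cop x, q <- cop y]) /\
      teq2 (cop 1) [:: (1, 1)] /\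
      (forall x y : H, eps (x * y) = eps x * eps y) /\ eps 1 = 1 &
      [/\ klinear S,
          forall x : H, \sum_(p <- cop x) S p.1 * p.2 = eps x *: 1 /\
                        \sum_(p <- cop x) p.1 * S p.2 = eps x *: 1
        & bijective S]].
End Tensor.

Section Partial.
Variables (k : fieldType) (H : algType k) (cop : H -> seq (H * H)).
Variable B : algType k.

Definition sym_partial_action (act : H -> B -> B) : Prop :=
  [/\ kbilinear act,
      forall a : B, act 1 a = a,
      forall (h : H) (a b : B),
        act h (a * b) = \sum_(p <- cop h) act p.1 a * act p.2 b,
      forall (h l : H) (a : B),
        act h (act l a) = \sum_(p <- cop h) act p.1 1 * act (p.2 * l) a
    & forall (h l : H) (a : B),
        act h (act l a) = \sum_(p <- cop h) act (p.1 * l) a * act p.2 1].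

Definition hact (h : H) (f : H -> B) : H -> B := fun l => f (l * h).

Definition conv (f g : H -> B) : H -> B :=
  fun l => \sum_(p <- cop l) f p.1 * g p.2.

Definition phi (act : H -> B -> B) (b : B) : H -> B := fun h => act h b.

(* Bbar = H |> varphi(B): the H-submodule of Hom_k(H,B) generated by   *)
(* varphi(B), i.e. the smallest set containing varphi(B) that is closed *)
(* under 0, +, scalar multiplication and the H-action.                  *)
Definition Bbar (act : H -> B -> B) (f : H -> B) : Prop :=
  forall P : (H -> B) -> Prop,
    (forall b, P (phi act b)) ->
    P (fun _ => 0) ->
    (forall g1 g2, P g1 -> P g2 -> P (fun l => g1 l + g2 l)) ->
    (forall (a : k) g, P g -> P (fun l => a *: g l)) ->
    (forall h g, P g -> P (hact h g)) ->
    P f.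
End Partial.

(* propositional list membership (for types without decidable equality) *)
Fixpoint inP (T : Type) (x : T) (s : seq T) : Prop :=
  if s is y :: s' then x = y \/ inP x s' else False.

From HB Require Import structures.
From mathcomp Require Import all_boot all_order all_algebra.
From Stdlib Require Import FunctionalExtensionality.
Import GRing.Theory.
Local Open Scope ring_scope.
Set Implicit Arguments.
Unset Strict Implicit.

(* Every element of Bbar is a finite sum of translates h |> phi(b).  The
   symmetric axioms of the partial action, combined with coassociativity, give
   phi(b) * (h |> phi(a)) = phi(b (h.a)) and (h |> phi(a)) * phi(b) = phi((h.a) b),
   which is the ideal property.  The antipode rewrites (h |> F) * G as
   sum h_(1) |> (F * (S(h_(2)) |> G)), so a product of two translates is a sum of
   translates of elements of phi(B): Bbar is closed under convolution.
   Idempotence comes from phi(b) = phi(b) * phi(1) and the module-algebra law. *)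

Section KLinear.
Variable k : fieldType.

Lemma klinear0 (U V : lmodType k) (f : U -> V) : klinear f -> f 0 = 0.
Proof.
move=> hf; have E := hf 1 0 0; rewrite !scale1r addr0 in E.
by apply: (@addrI _ (f 0)); rewrite addr0 -E.
Qed.

Lemma klinearD (U V : lmodType k) (f : U -> V) :
  klinear f -> forall x y, f (x + y) = f x + f y.
Proof. by move=> hf x y; have := hf 1 x y; rewrite !scale1r. Qed.

Lemma klinearZ (U V : lmodType k) (f : U -> V) :
  klinear f -> forall a x, f (a *: x) = a *: f x.
Proof. by move=> hf a x; rewrite -[a *: x]addr0 hf klinear0 // addr0. Qed.

Lemma klinear_sum (U V : lmodType k) (f : U -> V) (I : Type) (s : seq I) (F : I -> U) :
  klinear f -> f (\sum_(i <- s) F i) = \sum_(i <- s) f (F i).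
Proof.
move=> hf; elim: s => [|x s IH]; first by rewrite !big_nil klinear0.
by rewrite !big_cons klinearD // IH.
Qed.

Lemma klinear_comp (U V W : lmodType k) (f : V -> W) (g : U -> V) :
  klinear f -> klinear g -> klinear (fun x => f (g x)).
Proof. by move=> hf hg a x y; rewrite hg hf. Qed.

Lemma klinear_mulr (A : algType k) (c : A) : klinear (fun x : A => x * c).
Proof. by move=> a x y; rewrite mulrDl scalerAl. Qed.

Lemma klinear_mull (A : algType k) (c : A) : klinear (fun x : A => c * x).
Proof. by move=> a x y; rewrite mulrDr scalerAr. Qed.

Lemma kbilinear_mul (U : lmodType k) (A : algType k) (F G : U -> A) :
  klinear F -> klinear G -> kbilinear (fun x y => F x * G y).
Proof.
move=> hF hG; split=> [w|u] a x y; first by rewrite hF mulrDl scalerAl.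
by rewrite hG mulrDr scalerAr.
Qed.

Lemma ktrilinear_mul (U : lmodType k) (A : algType k) (F G K : U -> A) :
  klinear F -> klinear G -> klinear K ->
  ktrilinear (fun x y z => F x * G y * K z).
Proof.
move=> hF hG hK; split; [|split] => [y z|x z|x y] a u v.
- by rewrite hF !mulrDl !scalerAl.
- by rewrite hG mulrDr mulrDl scalerAl scalerAr.
- by rewrite hK mulrDr scalerAr.
Qed.

End KLinear.

Lemma inP_cat (T : Type) (q : T) s t : inP q (s ++ t) -> inP q s \/ inP q t.
Proof.
elim: s => [|x s IH] /=; first by right.
by case=> [->|/IH [h|h]]; [left; left | left; right | right].
Qed.

Lemma inP_map (T U : Type) (f : T -> U) q s : inP q (map f s) -> exists x, q = f x.
Proof. by elim: s => [|x s IH] //= [->|/IH //]; exists x. Qed.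

Lemma inP_allpairs (T U V : Type) (f : T -> U -> V) (s : seq T) (t : T -> seq U) q :
  inP q [seq f x y | x <- s, y <- t x] -> exists x y, q = f x y.
Proof.
elim: s => [|x s IH] //= Hq; case: (inP_cat Hq) => [Hx|/IH //].
by have [y ->] := inP_map Hx; exists x, y.
Qed.

Section HomAlgebra.
Variables (k : fieldType) (H : algType k) (cop : H -> seq (H * H)).
Variables (eps : H -> k) (S : H -> H) (B : algType k).
Hypothesis hopf : is_hopf cop eps S.

Lemma coassoc_sum (tr : H -> H -> H -> B) : ktrilinear tr -> forall x,
  \sum_(p <- cop x) \sum_(q <- cop p.1) tr q.1 q.2 p.2 =
  \sum_(p <- cop x) \sum_(q <- cop p.2) tr p.1 q.1 q.2.
Proof.
move=> htr x; case: hopf => _ hco _ _ _.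
by have := hco x B tr htr; rewrite !big_allpairs_dep.
Qed.

Lemma cop_mul_sum (b : H -> H -> B) : kbilinear b -> forall x y,
  \sum_(p <- cop (x * y)) b p.1 p.2 =
  \sum_(p <- cop x) \sum_(q <- cop y) b (p.1 * q.1) (p.2 * q.2).
Proof.
move=> hb x y; case: hopf => _ _ _ [hm _] _.
by have := hm x y B b hb; rewrite big_allpairs_dep.
Qed.

Lemma counit_sumr x : \sum_(p <- cop x) eps p.2 *: p.1 = x.
Proof. by case: hopf => _ _ [_ hc] _ _; case: (hc x). Qed.

Lemma antipode_sumr x : \sum_(p <- cop x) p.1 * S p.2 = eps x *: 1.
Proof. by case: hopf => _ _ _ _ [_ ha _]; case: (ha x). Qed.

Lemma antipode_klinear : klinear S.
Proof. by case: hopf => _ _ _ _ []. Qed.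

Lemma hact_klinear h (f : H -> B) : klinear f -> klinear (hact h f).
Proof. by move=> hf; apply: klinear_comp hf (klinear_mulr h). Qed.

Lemma hactM (a b : H) (f : H -> B) : hact a (hact b f) = hact (a * b) f.
Proof. by apply: functional_extensionality => l; rewrite /hact mulrA. Qed.

Lemma conv_assoc (f g u : H -> B) : klinear f -> klinear g -> klinear u ->
  conv cop (conv cop f g) u = conv cop f (conv cop g u).
Proof.
move=> hf hg hu; apply: functional_extensionality => l; rewrite /conv.
under eq_bigr do rewrite mulr_suml.
rewrite (coassoc_sum (ktrilinear_mul hf hg hu)).
apply: eq_bigr => p _; rewrite mulr_sumr.
by apply: eq_bigr => q _; rewrite mulrA.
Qed.

Lemma hact_conv (h : H) (f g : H -> B) : klinear f -> klinear g ->
  hact h (conv cop f g) =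
  (fun l => \sum_(p <- cop h) conv cop (hact p.1 f) (hact p.2 g) l).
Proof.
move=> hf hg; apply: functional_extensionality => l.
by rewrite /conv /hact (cop_mul_sum (kbilinear_mul hf hg)) exchange_big.
Qed.

(* At l, coassociativity brings h_(2) S(h_(3)) together; the antipode and then
   the counit axioms collapse it. *)
Lemma conv_hactl (h : H) (F G : H -> B) : klinear F -> klinear G ->
  conv cop (hact h F) G =
  (fun l => \sum_(p <- cop h) hact p.1 (conv cop F (hact (S p.2) G)) l).
Proof.
move=> hF hG; apply: functional_extensionality => l; rewrite /conv /hact.
apply/esym.
have bil w : kbilinear (fun u v => F u * G (v * w)).
  by apply: kbilinear_mul => //; apply: klinear_comp hG (klinear_mulr w).
under eq_bigr => p _ do rewrite (cop_mul_sum (bil (S p.2))).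
rewrite exchange_big; apply: eq_bigr => r _.
have GrK : klinear (fun z => G (r.2 * z)) by apply: klinear_comp hG (klinear_mull _).
have FrK : klinear (fun z => F (r.1 * z)) by apply: klinear_comp hF (klinear_mull _).
have tri : ktrilinear (fun u v w => F (r.1 * u) * G (r.2 * v * S w)).
  split; [|split] => [y z|x z|x y] a u v /=.
  - by rewrite mulrDr -scalerAr hF mulrDl -scalerAl.
  - by rewrite mulrDr mulrDl -scalerAr -scalerAl hG mulrDr -scalerAr.
  - by rewrite antipode_klinear mulrDr -scalerAr hG mulrDr -scalerAr.
rewrite (coassoc_sum tri).
have collapse (p : H * H) :
    \sum_(q <- cop p.2) F (r.1 * p.1) * G (r.2 * q.1 * S q.2)
    = F (r.1 * (eps p.2 *: p.1)) * G r.2.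
  rewrite -mulr_sumr; under eq_bigr do rewrite -mulrA.
  rewrite -(klinear_sum _ _ GrK) antipode_sumr -scalerAr mulr1 (klinearZ hG).
  by rewrite -scalerAr (klinearZ FrK) -scalerAl scalerAr.
under eq_bigr do rewrite collapse.
by rewrite -mulr_suml -(klinear_sum _ _ FrK) counit_sumr.
Qed.

End HomAlgebra.

Section Dilation.
Variables (k : fieldType) (H : algType k) (cop : H -> seq (H * H)).
Variables (eps : H -> k) (S : H -> H) (B : algType k) (act : H -> B -> B).
Hypothesis hopf : is_hopf cop eps S.
Hypothesis pa : sym_partial_action cop act.

Lemma act_klinearl b : klinear (fun h => act h b).
Proof. by case: pa => [[]]. Qed.

Lemma act_klinearr h : klinear (act h).
Proof. by case: pa => [[]]. Qed.

Lemma act1 b : act 1 b = b.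
Proof. by case: pa. Qed.

Lemma actM h a b : act h (a * b) = \sum_(p <- cop h) act p.1 a * act p.2 b.
Proof. by case: pa. Qed.

Lemma act_act_unitl h l a :
  act h (act l a) = \sum_(p <- cop h) act p.1 1 * act (p.2 * l) a.
Proof. by case: pa. Qed.

Lemma act_act_unitr h l a :
  act h (act l a) = \sum_(p <- cop h) act (p.1 * l) a * act p.2 1.
Proof. by case: pa. Qed.

Lemma act_mulr_klinear h b : klinear (fun z => act (z * h) b).
Proof. exact: klinear_comp (act_klinearl b) (klinear_mulr h). Qed.

Lemma phi_klinear b : klinear (phi act b).
Proof. exact: act_klinearl. Qed.

Lemma phiM a b : phi act (a * b) = conv cop (phi act a) (phi act b).
Proof. by apply: functional_extensionality => l; rewrite /conv /phi actM. Qed.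

Lemma phi_inj : injective (phi act).
Proof. by move=> a b /(congr1 (fun F => F 1)); rewrite /phi !act1. Qed.

Lemma phi_act h b : phi act (act h b) = conv cop (phi act 1) (hact h (phi act b)).
Proof.
by apply: functional_extensionality => l; rewrite /conv /phi /hact act_act_unitl.
Qed.

Lemma conv_phi_hact b h a :
  conv cop (phi act b) (hact h (phi act a)) = phi act (b * act h a).
Proof.
apply: functional_extensionality => l; rewrite /conv /phi /hact actM; apply/esym.
under eq_bigr do rewrite act_act_unitl mulr_sumr.
under eq_bigr do under eq_bigr do rewrite mulrA.
rewrite -(coassoc_sum hopf (tr := fun x y z => act x b * act y 1 * act (z * h) a));
  last exact: ktrilinear_mul (act_klinearl _) (act_klinearl _) (act_mulr_klinear _ _).
by apply: eq_bigr => q _; rewrite -mulr_suml -actM mulr1.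
Qed.

Lemma conv_hact_phi b h a :
  conv cop (hact h (phi act a)) (phi act b) = phi act (act h a * b).
Proof.
apply: functional_extensionality => l; rewrite /conv /phi /hact actM; apply/esym.
under eq_bigr do rewrite act_act_unitr mulr_suml.
rewrite (coassoc_sum hopf (tr := fun x y z => act (x * h) a * act y 1 * act z b));
  last exact: ktrilinear_mul (act_mulr_klinear _ _) (act_klinearl _) (act_klinearl _).
apply: eq_bigr => q _; under eq_bigr do rewrite -mulrA.
by rewrite -mulr_sumr -actM mul1r.
Qed.

Lemma conv_hact_phi_hact (x y : H * B) :
  conv cop (hact x.1 (phi act x.2)) (hact y.1 (phi act y.2)) =
  (fun l => \sum_(p <- cop x.1) hact p.1 (phi act (x.2 * act (S p.2 * y.1) y.2)) l).
Proof.
rewrite (conv_hactl hopf); [|exact: phi_klinear|exact: hact_klinear (phi_klinear _)].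
apply: functional_extensionality => l; apply: eq_bigr => p _.
by rewrite hactM conv_phi_hact.
Qed.

Lemma Bbar_phi b : Bbar act (phi act b).
Proof. by move=> P hphi. Qed.

Lemma Bbar0 : Bbar act (fun _ => 0).
Proof. by move=> P _ h0. Qed.

Lemma BbarD f g : Bbar act f -> Bbar act g -> Bbar act (fun l => f l + g l).
Proof.
move=> hf hg P hphi h0 hD hZ hH.
by apply: (hD); [exact: (hf P) | exact: (hg P)].
Qed.

Lemma Bbar_hact h f : Bbar act f -> Bbar act (hact h f).
Proof. by move=> hf P hphi h0 hD hZ hH; apply: (hH); exact: (hf P). Qed.

Lemma Bbar_sum (I : Type) (s : seq I) (F : I -> H -> B) :
  (forall i, Bbar act (F i)) -> Bbar act (fun l => \sum_(i <- s) F i l).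
Proof.
move=> hF; elim: s => [|x s IH].
  have -> : (fun l => \sum_(i <- [::]) F i l) = (fun _ => 0).
    by apply: functional_extensionality => l; rewrite big_nil.
  exact: Bbar0.
have -> : (fun l => \sum_(i <- x :: s) F i l)
          = (fun l => F x l + (fun l => \sum_(i <- s) F i l) l).
  by apply: functional_extensionality => l; rewrite big_cons.
exact: BbarD.
Qed.

Definition phi_span (s : seq (H * B)) : H -> B :=
  fun l => \sum_(x <- s) hact x.1 (phi act x.2) l.

Lemma Bbar_phi_span s : Bbar act (phi_span s).
Proof. by apply: Bbar_sum => x; apply: Bbar_hact; exact: Bbar_phi. Qed.

Lemma phi_span_klinear s : klinear (phi_span s).
Proof.
move=> a u v; rewrite /phi_span /hact /phi scaler_sumr -big_split.
by apply: eq_bigr => x _; rewrite mulrDl -scalerAl act_klinearl.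
Qed.

Lemma Bbar_phi_spanP f : Bbar act f -> exists s, f = phi_span s.
Proof.
move=> hf; apply: (hf (fun f => exists s, f = phi_span s)).
- move=> b; exists [:: (1, b)]; apply: functional_extensionality => l.
  by rewrite /phi_span big_seq1 /hact /phi mulr1.
- by exists [::]; apply: functional_extensionality => l; rewrite /phi_span big_nil.
- move=> g1 g2 [s1 ->] [s2 ->]; exists (s1 ++ s2).
  by apply: functional_extensionality => l; rewrite /phi_span big_cat.
- move=> a g [s ->]; exists [seq (x.1, a *: x.2) | x <- s].
  apply: functional_extensionality => l; rewrite /phi_span big_map scaler_sumr.
  by apply: eq_bigr => x _; rewrite /hact /phi /= (klinearZ (act_klinearr _)).
- move=> h g [s ->]; exists [seq (h * x.1, x.2) | x <- s].
  apply: functional_extensionality => l; rewrite /phi_span big_map /hact /=.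
  by apply: eq_bigr => x _; rewrite mulrA.
Qed.

Lemma Bbar_klinear f : Bbar act f -> klinear f.
Proof. by case/Bbar_phi_spanP => s ->; apply: phi_span_klinear. Qed.

Lemma conv_phi_spanl s g : conv cop (phi_span s) g =
  (fun l => \sum_(x <- s) conv cop (hact x.1 (phi act x.2)) g l).
Proof.
apply: functional_extensionality => l; rewrite /conv /phi_span.
by under eq_bigr do rewrite mulr_suml; rewrite exchange_big.
Qed.

Lemma conv_phi_spanr s g : conv cop g (phi_span s) =
  (fun l => \sum_(x <- s) conv cop g (hact x.1 (phi act x.2)) l).
Proof.
apply: functional_extensionality => l; rewrite /conv /phi_span.
by under eq_bigr do rewrite mulr_sumr; rewrite exchange_big.
Qed.

Lemma Bbar_conv f g : Bbar act f -> Bbar act g -> Bbar act (conv cop f g).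
Proof.
case/Bbar_phi_spanP => s ->; case/Bbar_phi_spanP => t ->.
rewrite conv_phi_spanl; apply: Bbar_sum => x.
rewrite conv_phi_spanr; apply: Bbar_sum => y.
rewrite conv_hact_phi_hact; apply: Bbar_sum => p.
apply: Bbar_hact; exact: Bbar_phi.
Qed.

Lemma Bbar_idem f : Bbar act f ->
  exists s : seq ((H -> B) * (H -> B)),
    (forall q, inP q s -> Bbar act q.1 /\ Bbar act q.2) /\
    f = (fun l => \sum_(q <- s) conv cop q.1 q.2 l).
Proof.
case/Bbar_phi_spanP => s ->.
exists [seq (hact p.1 (phi act x.2), hact p.2 (phi act 1)) | x <- s, p <- cop x.1].
split=> [q Hq|].
  by have [x [p ->]] := inP_allpairs Hq; split; apply: Bbar_hact; apply: Bbar_phi.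
apply: functional_extensionality => l; rewrite big_allpairs_dep /phi_span.
apply: eq_bigr => x _.
by rewrite -{1}[x.2]mulr1 phiM (hact_conv hopf) //; apply: phi_klinear.
Qed.

Lemma Bbar_phi_ideal f b : Bbar act f ->
  (exists b', conv cop f (phi act b) = phi act b') /\
  (exists b'', conv cop (phi act b) f = phi act b'').
Proof.
case/Bbar_phi_spanP => s ->; split.
  exists (\sum_(x <- s) act x.1 x.2 * b); rewrite conv_phi_spanl.
  apply: functional_extensionality => l /=.
  rewrite /phi (klinear_sum _ _ (act_klinearr l)).
  by apply: eq_bigr => x _; rewrite conv_hact_phi.
exists (\sum_(x <- s) b * act x.1 x.2); rewrite conv_phi_spanr.
apply: functional_extensionality => l /=.
rewrite /phi (klinear_sum _ _ (act_klinearr l)).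
by apply: eq_bigr => x _; rewrite conv_phi_hact.
Qed.

End Dilation.

Theorem mainTheorem15 (k : fieldType) (H : algType k)
  (cop : H -> seq (H * H)) (eps : H -> k) (S : H -> H)
  (B : algType k) (act : H -> B -> B) :
  is_hopf cop eps S ->
  sym_partial_action cop act ->
  (* (1) Bbar is closed under convolution, associative, an H-module algebra,
         and idempotent *)
  [/\ (forall f g, Bbar act f -> Bbar act g -> Bbar act (conv cop f g)),
      (forall f g u, Bbar act f -> Bbar act g -> Bbar act u ->
         conv cop (conv cop f g) u = conv cop f (conv cop g u)),
      (forall (h : H) f g, Bbar act f -> Bbar act g ->
         hact h (conv cop f g) =
         (fun l => \sum_(p <- cop h) conv cop (hact p.1 f) (hact p.2 g) l)),
      (forall f, Bbar act f ->
         exists s : seq ((H -> B) * (H -> B)),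
           (forall q, inP q s -> Bbar act q.1 /\ Bbar act q.2) /\
           f = (fun l => \sum_(q <- s) conv cop q.1 q.2 l))
    & (forall b, Bbar act (phi act b))] /\
  (* (2) varphi is multiplicative *)
  (forall a b : B, phi act (a * b) = conv cop (phi act a) (phi act b)) /\
  (* (3) varphi(B) is an ideal of Bbar *)
  (forall f (b : B), Bbar act f ->
     (exists b', conv cop f (phi act b) = phi act b') /\
     (exists b'', conv cop (phi act b) f = phi act b'')) /\
  (* globalization: varphi injective and varphi(h.b) = varphi(1) * (h |> varphi(b)) *)
  (forall a b : B, phi act a = phi act b -> a = b) /\
  (forall (h : H) (b : B),
     phi act (act h b) = conv cop (phi act 1) (hact h (phi act b))).
Proof.
move=> hopf pa; have lin := Bbar_klinear pa.
split; [split|split; [|split; [|split]]].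
- exact: (Bbar_conv hopf pa).
- by move=> f g u /lin hf /lin hg /lin hu; apply: (conv_assoc hopf).
- by move=> h f g /lin hf /lin hg; apply: (hact_conv hopf).
- exact: (Bbar_idem hopf pa).
- exact: Bbar_phi.
- exact: phiM.
- exact: (Bbar_phi_ideal hopf pa).
- exact: (phi_inj pa).
- exact: (phi_act pa).
Qed.
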